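(* Let $\sigma=(a_1,\ldots,a_s)$ be a partition of $r$ with $a_1\ge a_2\ge\cdots\ge a_s\ge1$ and let $H=H(n,r,q\mid\sigma)$ have classes $V_1,\ldots,V_n$. Let $B\subseteq V(H)$, let $B_i=B\cap V_i$ and $b_i=|B_i|$, where the classes are labelled so that $b_1\ge b_2\ge\cdots\ge b_n$. Let $E^*$ be an edge of $H$ such that for each $1\le i\le s$ the set $A_i=E^*\cap V_i$ has $|A_i|=a_i$, with $A_i\subseteq B_i$ when $a_i<b_i$ and $B_i\subseteq A_i$ when $a_i\ge b_i$. Then \[|E^*\cap B|=\max\{|E\cap B| : E\in E(H)\}.\]
   Context: A $\sigma$-hypergraph $H=H(n,r,q\mid\sigma)$, for a partition $\sigma=(a_1,\ldots,a_s)$ of $r$, is the $r$-uniform hypergraph whose vertex set is the disjoint union of $n$ classes $V_1,\ldots,V_n$, each of size $q$; an $r$-subset $K$ of vertices is an edge iff the multiset of non-zero values $|K\cap V_i|$ ($1\le i\le n$) equals $\sigma$. $E(H)$ denotes the edge set. *)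

From mathcomp Require Import all_boot.
Set Implicit Arguments. Unset Strict Implicit. Unset Printing Implicit Defensive.

(* Vertices of H(n,r,q|sigma): pairs (i, x) with i : 'I_n the class index
   (class V_{i+1}) and x : 'I_q the position inside the class. *)
Definition vtx (n q : nat) := ('I_n * 'I_q)%type.

Definition cls (n q : nat) (K : {set vtx n q}) (i : 'I_n) : {set vtx n q} :=
  [set v in K | v.1 == i].

Definition is_partition (r : nat) (sigma : seq nat) : Prop :=
  sumn sigma = r /\ all (fun a => 0 < a) sigma /\ sorted geq sigma.

Definition is_edge (n r q : nat) (sigma : seq nat) (K : {set vtx n q}) : bool :=
  (#|K| == r) &&
  perm_eq [seq k <- [seq #|cls K i| | i <- enum 'I_n] | k != 0] sigma.

From mathcomp Require Import all_boot.
From mathcomp Require Import zify.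

Set Implicit Arguments.
Unset Strict Implicit.
Unset Printing Implicit Defensive.

(* Count by layers: min(x, y) is the number of levels t with t < x and t < y.
   Summing over the classes and exchanging the sums, sum_i min(|E_i ∩ V_i|, b_i)
   becomes a sum over t of the number of classes above level t in both
   sequences, which is at most the minimum of the two level-set sizes.  For an
   edge E these sizes are those of sigma, whatever E is; and for the sorted
   sequences a_i and b_i the level sets are nested, so the minimum is attained.
   Hence sum_i min(a_i, b_i) bounds |E ∩ B| for every edge, and E* attains it. *)

Definition nonincreasing n (f : 'I_n -> nat) :=
  forall i j : 'I_n, i <= j -> f j <= f i.

Definition level n (f : 'I_n -> nat) (t : nat) : {set 'I_n} := [set i | t < f i].

Lemma sum_ltn_ord (x N : nat) : \sum_(t < N) (t < x) = minn x N.
Proof.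
elim: N => [|N IH]; first by rewrite big_ord0 minn0.
by rewrite big_ord_recr /= IH; case: (ltnP N x) => /=; lia.
Qed.

Lemma sum_nat_of_bool_card n (P : pred 'I_n) : \sum_i P i = #|P|.
Proof.
rewrite -sum1_card [RHS]big_mkcond.
by apply: eq_bigr => i _; rewrite unfold_in; case: (P i).
Qed.

Lemma sum_minn_card_levels n (f g : 'I_n -> nat) (N : nat) :
  (forall i, f i <= N) -> (forall i, g i <= N) ->
  \sum_i minn (f i) (g i) = \sum_(t < N) #|level f t :&: level g t|.
Proof.
move=> fN gN.
rewrite (eq_bigr (fun i => \sum_(t < N) ((t < f i) && (t < g i)))); last first.
  move=> i _; rewrite -(minn_idPl (leq_trans (geq_minl _ _) (fN i))) -sum_ltn_ord.
  by apply: eq_bigr => t _; rewrite leq_min.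
rewrite exchange_big; apply: eq_bigr => t _.
by rewrite sum_nat_of_bool_card; apply: eq_card => i; rewrite !inE.
Qed.

Lemma card_setI_comparable (T : finType) (A C : {set T}) :
  (A \subset C) || (C \subset A) -> #|A :&: C| = minn #|A| #|C|.
Proof.
case/orP => sAC.
  by rewrite (setIidPl sAC); apply/esym/minn_idPl/subset_leq_card.
by rewrite (setIidPr sAC); apply/esym/minn_idPr/subset_leq_card.
Qed.

Lemma level_comparable n (f g : 'I_n -> nat) (t : nat) :
  nonincreasing f -> nonincreasing g ->
  (level f t \subset level g t) || (level g t \subset level f t).
Proof.
move=> f_dec g_dec; case/boolP: (_ \subset _) => //= /subsetPn [i fi gi].
apply/subsetP => j gj; move: fi gi gj; rewrite !inE => fi gi gj.
case: (leqP i j) => [/g_dec | /ltnW /f_dec]; lia.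
Qed.

Lemma sum_minn_rearrangement n (f a b : 'I_n -> nat) :
  nonincreasing a -> nonincreasing b ->
  (forall t, #|level f t| = #|level a t|) ->
  \sum_i minn (f i) (b i) <= \sum_i minn (a i) (b i).
Proof.
move=> a_dec b_dec same_levels.
set N := \max_i (f i + a i + b i).
have bound i : f i + a i + b i <= N by exact: leq_bigmax.
rewrite !(@sum_minn_card_levels _ _ _ N) => [|i|i|i|i];
  try by have := bound i; lia.
apply: leq_sum => t _.
rewrite (card_setI_comparable (level_comparable t a_dec b_dec)) -same_levels.
by rewrite leq_min !subset_leq_card ?subsetIl ?subsetIr.
Qed.

Section EdgeLevels.

Variables (n q : nat).

Lemma card_cls_sum (A : {set vtx n q}) : #|A| = \sum_i #|cls A i|.
Proof.
rewrite -sum1_card (partition_big (fun v : vtx n q => v.1) xpredT) //=.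
by apply: eq_bigr => i _; rewrite -sum1_card; apply: eq_bigl => v; rewrite !inE.
Qed.

Lemma cls_setI (K L : {set vtx n q}) (i : 'I_n) :
  cls (K :&: L) i = cls K i :&: cls L i.
Proof. by apply/setP => v; rewrite !inE andbACA andbb. Qed.

Lemma card_level_count (f : 'I_n -> nat) (t : nat) :
  #|level f t| = count (fun k => t < k) [seq f i | i <- enum 'I_n].
Proof.
rewrite count_map cardsE cardE /enum_mem size_filter /= -enumT count_filter.
by apply: eq_count => i; rewrite /= andbT.
Qed.

Variables (r : nat) (sigma : seq nat).

Lemma size_partition_edge (E : {set vtx n q}) :
  is_edge r sigma E -> size sigma <= n.
Proof.
case/andP => _ /perm_size <-.
by rewrite size_filter (leq_trans (count_size _ _)) // size_map size_enum_ord.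
Qed.

Lemma card_level_edge (E : {set vtx n q}) (t : nat) :
  is_edge r sigma E ->
  #|level (fun i => #|cls E i|) t| = count (fun k => t < k) sigma.
Proof.
case/andP => _ /permP <-; rewrite card_level_count count_filter.
by apply: eq_count => -[|k] /=; rewrite ?andbT.
Qed.

Lemma card_level_nth (t : nat) : size sigma <= n ->
  #|level (fun i : 'I_n => nth 0 sigma i) t| = count (fun k => t < k) sigma.
Proof.
move=> sigma_n; rewrite card_level_count.
have -> : [seq nth 0 sigma i | i : 'I_n <- enum 'I_n] = mkseq (nth 0 sigma) n.
  by rewrite /mkseq -val_enum_ord -map_comp.
rewrite -(subnKC sigma_n) /mkseq iotaD map_cat count_cat -/(mkseq _ _) mkseq_nth.
rewrite -[RHS]addn0; congr (_ + _).
apply/eqP; rewrite count_map -leqn0 leqNgt -has_count.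
by apply/hasPn => i; rewrite mem_iota => /andP [i_ge _] /=; rewrite nth_default.
Qed.

End EdgeLevels.

Lemma nth_partition_nonincreasing (n r : nat) (sigma : seq nat) :
  is_partition r sigma -> nonincreasing (fun i : 'I_n => nth 0 sigma i).
Proof.
case=> _ [_ sorted_sigma] i j ij /=.
case: (ltnP j (size sigma)) => j_lt; last by rewrite nth_default.
have geq_trans : transitive geq by move=> x y z /= yx zy; apply: leq_trans zy yx.
have i_lt := leq_ltn_trans ij j_lt.
by have := sorted_leq_nth geq_trans leqnn 0 sorted_sigma i j i_lt j_lt ij.
Qed.

Theorem lemma2p4 (n r q : nat) (sigma : seq nat)
  (Hsigma : is_partition r sigma)
  (B : {set vtx n q})
  (Hb : forall i j : 'I_n, i <= j -> #|cls B j| <= #|cls B i|)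
  (Estar : {set vtx n q})
  (HE : is_edge r sigma Estar)
  (HA : forall i : 'I_n, i < size sigma ->
     #|cls Estar i| = nth 0 sigma i /\
     (if nth 0 sigma i < #|cls B i| then cls Estar i \subset cls B i
      else cls B i \subset cls Estar i)) :
  #|Estar :&: B| = \max_(E : {set vtx n q} | is_edge r sigma E) #|E :&: B|.
Proof.
set a := fun i : 'I_n => nth 0 sigma i.
set b := fun i : 'I_n => #|cls B i|.
have edge_le E : is_edge r sigma E -> #|E :&: B| <= \sum_i minn (a i) (b i).
  move=> edgeE; rewrite card_cls_sum.
  apply: (@leq_trans (\sum_i minn #|cls E i| (b i))).
    apply: leq_sum => i _; rewrite cls_setI leq_min.
    by rewrite !subset_leq_card ?subsetIl ?subsetIr.
  apply: sum_minn_rearrangement (nth_partition_nonincreasing Hsigma) Hb _ => t.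
  rewrite (card_level_edge _ edgeE) card_level_nth //.
  exact: size_partition_edge HE.
have Estar_ge : \sum_i minn (a i) (b i) <= #|Estar :&: B|.
  rewrite card_cls_sum; apply: leq_sum => i _; rewrite cls_setI.
  case: (ltnP i (size sigma)) => i_lt; last by rewrite /a nth_default ?min0n.
  have [card_Ei sub_Ei] := HA i i_lt.
  have -> : a i = #|cls Estar i| by rewrite card_Ei.
  rewrite card_setI_comparable //.
  by move: sub_Ei; case: ifP => _ ->; rewrite ?orbT.
apply/eqP; rewrite eqn_leq (leq_bigmax_cond _ HE) /=.
by apply/bigmax_leqP => E edgeE; apply: leq_trans (edge_le E edgeE) Estar_ge.
Qed.
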